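(* Let $C=\mathbb{S}^1\times\mathbb{R}$ be the flat Euclidean cylinder, $\theta_0\in\mathbb{S}^1$, $v=\{\theta_0\}\times\mathbb{R}$, and let $f:C\to C$ be a geodesic-preserving bijection with $f(v)=v$, $f(\theta_0,0)=(\theta_0,0)$ and $f(\theta_0,1)=(\theta_0,1)$. Then $f(\theta_0,n/2^m)=(\theta_0,n/2^m)$ for all integers $n$ and $m\geq 0$.
   Context: $C$ carries the product of the flat metric on $\mathbb{S}^1=\mathbb{R}/\mathbb{Z}$ and the standard metric on $\mathbb{R}$. A geodesic is the image of a locally isometric immersion of the whole real line; a bijection (not assumed continuous) is geodesic-preserving if it maps every geodesic onto a geodesic as a set. *)

From Stdlib Require Import Reals Lra ZArith.
Open Scope R_scope.

(* Fractional part: x - floor x, in [0,1).  (up x is the integer with x < up x <= x+1.) *)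
Definition frac (x : R) : R := x - IZR (up x) + 1.

Lemma frac_range (x : R) : 0 <= frac x < 1.
Proof.
  unfold frac; destruct (archimed x) as [H1 H2]; lra.
Qed.

(* The flat cylinder C = S^1 x R with S^1 = R/Z; the angle is the
   representative in [0,1). *)
Record cyl : Type := Cyl { th : R; ht : R; th_range : 0 <= th < 1 }.

Definition pt (t y : R) : cyl := Cyl (frac t) y (frac_range t).

Definition distS1 (a b : R) : R := Rmin (Rabs (a - b)) (1 - Rabs (a - b)).

Definition cdist (p q : cyl) : R :=
  sqrt (distS1 (th p) (th q) ^ 2 + (ht p - ht q) ^ 2).

Definition local_isometry (g : R -> cyl) : Prop :=
  forall s, exists eps, 0 < eps /\
    forall s1 s2, Rabs (s1 - s) < eps -> Rabs (s2 - s) < eps ->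
      cdist (g s1) (g s2) = Rabs (s1 - s2).

Definition geodesic (G : cyl -> Prop) : Prop :=
  exists g : R -> cyl, local_isometry g /\ forall p, G p <-> exists s, g s = p.

Definition image (f : cyl -> cyl) (A : cyl -> Prop) : cyl -> Prop :=
  fun q => exists p, A p /\ f p = q.

Definition bijective (f : cyl -> cyl) : Prop :=
  exists g : cyl -> cyl, (forall p, g (f p) = p) /\ (forall q, f (g q) = q).

Definition geodesic_preserving (f : cyl -> cyl) : Prop :=
  forall G, geodesic G -> geodesic (image f G).

Definition vline (t0 : R) : cyl -> Prop := fun p => th p = frac t0.

From Stdlib Require Import Reals Lra Lia ZArith ProofIrrelevance Classical.
Open Scope R_scope.

(* Geodesics of the flat cylinder are exactly the images of the lines
   s |-> (a + c s, b + d s) with c^2 + d^2 = 1: horizontal circles, vertical lines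
   and helices.  As f is injective and preserves v, a non-horizontal image of a
   circle or a non-vertical image of a vertical line would meet v too often, so
   f(theta, y) = (alpha theta, phi y); hence helices go to helices, and parallel
   helices to helices of equal slope.  Comparing the images of the helices of
   slope beta through (theta0, 0) and through (theta0, y) shows that
   m (phi (x + y) - phi x - phi y) is an integer, m the slope of the image.
   Halving beta halves m, so the defect vanishes: phi is additive, and fixes the
   dyadic rationals since phi 1 = 1. *)

(** * Arithmetic on R and R/Z *)

Lemma cyl_eq (p q : cyl) : th p = th q -> ht p = ht q -> p = q.
Proof.
  destruct p as [a b Ha], q as [c d Hc]; simpl; intros -> ->.
  f_equal; apply proof_irrelevance.
Qed.

Lemma IZR_neq_half (n : Z) : IZR n <> 1 / 2.
Proof.
  intro Hn. assert (n = 0%Z) as -> by (apply one_IZR_lt1; lra). simpl in Hn. lra.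
Qed.

Lemma frac_decomp (x : R) : exists n : Z, x = frac x + IZR n.
Proof. exists (up x - 1)%Z. unfold frac. rewrite minus_IZR. simpl. lra. Qed.

Lemma frac_of_range (x : R) (n : Z) : 0 <= x - IZR n < 1 -> frac x = x - IZR n.
Proof.
  intros Hx. unfold frac. rewrite <- (tech_up x (n + 1)); rewrite plus_IZR; simpl; lra.
Qed.

Lemma frac_id (x : R) : 0 <= x < 1 -> frac x = x.
Proof. intros Hx. rewrite (frac_of_range x 0); simpl; lra. Qed.

Lemma frac_eq (x y : R) : frac x = frac y <-> exists n : Z, x - y = IZR n.
Proof.
  destruct (frac_decomp y) as [m Hm]. split.
  - intros Hxy. destruct (frac_decomp x) as [n Hn].
    exists (n - m)%Z. rewrite minus_IZR. lra.
  - intros [n Hn]. pose proof (frac_range y).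
    rewrite (frac_of_range x (n + m)); rewrite plus_IZR; lra.
Qed.

Lemma frac_ext (x y : R) : x = y -> frac x = frac y.
Proof. now intros ->. Qed.

Lemma frac_addZ (x : R) (n : Z) : frac (x + IZR n) = frac x.
Proof. apply frac_eq. exists n. ring. Qed.

Lemma frac_add_half_neq (x : R) : frac (x + 1 / 2) <> frac x.
Proof.
  intros [n Hn]%frac_eq. apply (IZR_neq_half n). lra.
Qed.

Lemma distS1_of_rep (u w e : R) (n : Z) : 0 <= u < 1 -> 0 <= w < 1 ->
  u - w = e + IZR n -> Rabs e <= 1 / 2 -> distS1 u w = Rabs e.
Proof.
  intros Hu Hw Huw He.
  assert (He' : -(1/2) <= e <= 1/2) by (revert He; unfold Rabs; destruct Rcase_abs; lra).
  assert (Hn : (-2 < n < 2)%Z) by (split; apply lt_IZR; simpl; lra).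
  assert (n = -1 \/ n = 0 \/ n = 1)%Z as [-> | [-> | ->]] by lia; simpl in Huw;
    unfold distS1, Rmin, Rabs; repeat destruct Rle_dec; repeat destruct Rcase_abs; lra.
Qed.

Lemma affine_Z_valued_const (A B : R) : (forall z, exists n : Z, A + B * z = IZR n) -> B = 0.
Proof.
  intros H. destruct (Req_dec B 0) as [|HB]; [assumption|exfalso].
  destruct (H 0) as [n0 H0], (H (1 / (2 * B))) as [n1 H1].
  apply (IZR_neq_half (n1 - n0)). rewrite minus_IZR, <- H0, <- H1. field. assumption.
Qed.

Lemma exists_pow2_gt (x : R) : exists N : nat, x < 2 ^ N.
Proof.
  destruct (Pow_x_infinity 2 ltac:(rewrite Rabs_right; lra) (x + 1)) as [N HN].
  exists N. specialize (HN N (le_n N)). rewrite Rabs_right in HN; [lra|].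
  apply Rle_ge, pow_le. lra.
Qed.

Lemma additive_fix_dyadic (g : R -> R) :
  (forall x y, g (x + y) = g x + g y) -> g 1 = 1 ->
  forall (n : Z) (m : nat), g (IZR n / 2 ^ m) = IZR n / 2 ^ m.
Proof.
  intros Hadd H1.
  assert (H0 : g 0 = 0) by (specialize (Hadd 0 0); rewrite Rplus_0_r in Hadd; lra).
  assert (HZ : forall (z : Z) y, g (IZR z * y) = IZR z * g y).
  { intros z y. induction z as [|z IH|z IH] using Z.peano_ind.
    - rewrite !Rmult_0_l. exact H0.
    - rewrite succ_IZR, Rmult_plus_distr_r, Rmult_1_l, Hadd, IH. ring.
    - assert (E := Hadd (IZR (Z.pred z) * y) y).
      rewrite <- Z.sub_1_r, minus_IZR in *. simpl in *.
      replace ((IZR z - 1) * y + y) with (IZR z * y) in E by ring. lra. }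
  assert (Hpow : forall k, g (/ 2 ^ k) = / 2 ^ k).
  { induction k as [|k IH]; [simpl; rewrite Rinv_1; exact H1|].
    assert (Hk : 2 ^ k <> 0) by (apply pow_nonzero; lra).
    replace (/ 2 ^ k) with (/ 2 ^ S k + / 2 ^ S k) in IH by (simpl; field; assumption).
    rewrite Hadd in IH. lra. }
  intros n m. unfold Rdiv. rewrite HZ, Hpow. reflexivity.
Qed.

Definition sdiff (u w : R) : R := frac (u - w + 1 / 2) - 1 / 2.

Lemma sdiff_rep (u w : R) : exists n : Z, u - w = sdiff u w + IZR n.
Proof.
  destruct (frac_decomp (u - w + 1 / 2)) as [n Hn]. exists n. unfold sdiff. lra.
Qed.

Lemma distS1_sdiff (u w : R) : 0 <= u < 1 -> 0 <= w < 1 -> distS1 u w = Rabs (sdiff u w).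
Proof.
  intros Hu Hw. destruct (sdiff_rep u w) as [n Hn]. apply (distS1_of_rep _ _ _ n Hu Hw Hn).
  pose proof (frac_range (u - w + 1 / 2)). apply Rabs_le. unfold sdiff. lra.
Qed.

(** * Geodesics of the cylinder *)

Definition line (a b c d s : R) : cyl := pt (a + c * s) (b + d * s).

Definition line_set (a b c d : R) : cyl -> Prop := fun q => exists s, line a b c d s = q.

Lemma unit_coord_le1 (c d : R) : c ^ 2 + d ^ 2 = 1 -> -1 <= c <= 1.
Proof. intros H. pose proof (pow2_ge_0 d). split; nra. Qed.

Lemma cdist_sq (p q : cyl) : cdist p q ^ 2 = distS1 (th p) (th q) ^ 2 + (ht p - ht q) ^ 2.
Proof.
  unfold cdist. rewrite <- Rsqr_pow2, Rsqr_sqrt; [reflexivity|].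
  apply Rplus_le_le_0_compat; apply pow2_ge_0.
Qed.

Lemma line_local_isometry (a b c d : R) : c ^ 2 + d ^ 2 = 1 -> local_isometry (line a b c d).
Proof.
  intros Hcd s. exists (1 / 4). split; [lra|]. intros s1 s2 H1 H2.
  apply Rabs_def2 in H1, H2.
  assert (Hc := unit_coord_le1 c d Hcd).
  assert (Hs : Rabs (c * (s1 - s2)) <= 1 / 2) by (apply Rabs_le; split; nra).
  destruct (frac_decomp (a + c * s1)) as [n1 Hn1], (frac_decomp (a + c * s2)) as [n2 Hn2].
  assert (Hdist : distS1 (th (line a b c d s1)) (th (line a b c d s2)) = Rabs (c * (s1 - s2))).
  { apply (distS1_of_rep _ _ _ (n2 - n1)); try apply th_range; [|exact Hs].
    cbn. rewrite minus_IZR. lra. }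
  unfold cdist. rewrite Hdist. unfold line, pt; cbn [th ht].
  replace (Rabs (c * (s1 - s2)) ^ 2 + (b + d * s1 - (b + d * s2)) ^ 2)
    with (Rabs (s1 - s2) ^ 2)
    by (rewrite !pow2_abs; transitivity ((c ^ 2 + d ^ 2) * (s1 - s2) ^ 2); [rewrite Hcd|]; ring).
  apply sqrt_pow2, Rabs_pos.
Qed.

Lemma geodesic_of_line_set (G : cyl -> Prop) (a b c d : R) : c ^ 2 + d ^ 2 = 1 ->
  (forall q, G q <-> line_set a b c d q) -> geodesic G.
Proof. intros Hcd HG. exists (line a b c d). split; [apply line_local_isometry|]; assumption. Qed.

(* Equality case of the Cauchy-Schwarz inequality. *)
Lemma collinear_of_sq_dists (e h r e' h' r' : R) : r' <> 0 ->
  e ^ 2 + h ^ 2 = r ^ 2 -> e' ^ 2 + h' ^ 2 = r' ^ 2 ->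
  (e - e') ^ 2 + (h - h') ^ 2 = (r - r') ^ 2 -> e = e' / r' * r /\ h = h' / r' * r.
Proof.
  intros Hr' H1 H2 H3.
  assert (Hdot : e * e' + h * h' = r * r') by lra.
  assert (Hsq : (r' * e - e' * r)² + (r' * h - h' * r)² = 0).
  { unfold Rsqr. transitivity (r' ^ 2 * (e ^ 2 + h ^ 2) - 2 * r' * r * (e * e' + h * h')
                               + r ^ 2 * (e' ^ 2 + h' ^ 2)); [ring|].
    rewrite H1, H2, Hdot. ring. }
  apply Rplus_sqr_eq_0 in Hsq as [He Hh].
  split; field_simplify_eq; lra.
Qed.

Definition angle_disp (g : R -> cyl) (s0 t : R) : R := sdiff (th (g t)) (th (g s0)).

Definition height_disp (g : R -> cyl) (s0 t : R) : R := ht (g t) - ht (g s0).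

Lemma local_isometry_chart (g : R -> cyl) (s0 : R) : local_isometry g ->
  exists eps, 0 < eps /\ forall t t', Rabs (t - s0) < eps -> Rabs (t' - s0) < eps ->
    (angle_disp g s0 t - angle_disp g s0 t') ^ 2
    + (height_disp g s0 t - height_disp g s0 t') ^ 2 = (t - t') ^ 2.
Proof.
  intros Hg. destruct (Hg s0) as [e1 [He1 Hiso]].
  set (eps := Rmin e1 (1 / 8)).
  assert (Heps : 0 < eps) by (unfold eps, Rmin; destruct Rle_dec; lra).
  assert (Heps1 : eps <= e1) by apply Rmin_l.
  assert (Heps2 : eps <= 1 / 8) by apply Rmin_r.
  set (E := angle_disp g s0). set (H := height_disp g s0).
  assert (Hsmall : forall t, Rabs (t - s0) < eps -> Rabs (E t) < 1 / 8).
  { intros t Ht. enough (Rabs (E t) <= Rabs (t - s0)) by lra.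
    assert (Hd : cdist (g t) (g s0) ^ 2 = E t ^ 2 + H t ^ 2).
    { rewrite cdist_sq, distS1_sdiff, pow2_abs by apply th_range. reflexivity. }
    rewrite Hiso, pow2_abs in Hd by (rewrite ?Rminus_diag, ?Rabs_R0; lra).
    apply Rsqr_le_abs_0. rewrite !Rsqr_pow2, Hd. pose proof (pow2_ge_0 (H t)). lra. }
  exists eps. split; [assumption|]. intros t t' Ht Ht'.
  destruct (sdiff_rep (th (g t)) (th (g s0))) as [n Hn].
  destruct (sdiff_rep (th (g t')) (th (g s0))) as [n' Hn'].
  assert (Hd : distS1 (th (g t)) (th (g t')) = Rabs (E t - E t')).
  { apply (distS1_of_rep _ _ _ (n - n')); try apply th_range.
    - rewrite minus_IZR. unfold E, angle_disp. lra.
    - apply Rabs_le.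
      pose proof (Rabs_def2 _ _ (Hsmall t Ht)). pose proof (Rabs_def2 _ _ (Hsmall t' Ht')). lra. }
  rewrite <- (pow2_abs (t - t')), <- (Hiso t t'), cdist_sq, Hd, pow2_abs by lra.
  unfold H, height_disp. ring.
Qed.

Lemma local_isometry_locally_line (g : R -> cyl) (s0 : R) : local_isometry g ->
  exists eps, 0 < eps /\ exists a b c d, c ^ 2 + d ^ 2 = 1 /\
    forall t, Rabs (t - s0) < eps -> g t = line a b c d t.
Proof.
  intros Hg. destruct (local_isometry_chart g s0 Hg) as [eps [Heps Hchart]].
  set (E := angle_disp g s0). set (H := height_disp g s0).
  assert (Hbase : E s0 = 0 /\ H s0 = 0).
  { unfold E, H, angle_disp, height_disp, sdiff.
    rewrite !Rminus_diag, Rplus_0_l, frac_id; lra. }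
  assert (Hpyth : forall t, Rabs (t - s0) < eps -> E t ^ 2 + H t ^ 2 = (t - s0) ^ 2).
  { intros t Ht. assert (Hc := Hchart t s0 Ht ltac:(rewrite Rminus_diag, Rabs_R0; lra)).
    fold E H in Hc. destruct Hbase as [E0 H0]. rewrite E0, H0 in Hc. rewrite <- Hc. ring. }
  set (r0 := eps / 2).
  assert (Hr0 : Rabs (s0 + r0 - s0) < eps) by (rewrite Rabs_right; unfold r0; lra).
  assert (Hr0' : r0 <> 0) by (unfold r0; lra).
  assert (Hpyth_r0 : E (s0 + r0) ^ 2 + H (s0 + r0) ^ 2 = r0 ^ 2)
    by (rewrite (Hpyth _ Hr0); f_equal; ring).
  set (c := E (s0 + r0) / r0). set (d := H (s0 + r0) / r0).
  exists eps. split; [assumption|].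
  exists (th (g s0) - c * s0), (ht (g s0) - d * s0), c, d. split.
  { unfold c, d. replace ((E (s0 + r0) / r0) ^ 2 + (H (s0 + r0) / r0) ^ 2)
      with ((E (s0 + r0) ^ 2 + H (s0 + r0) ^ 2) / r0 ^ 2) by (field; assumption).
    rewrite Hpyth_r0. field. assumption. }
  intros t Ht.
  assert (Hpair := Hchart _ _ Ht Hr0). fold E H in Hpair.
  replace (t - (s0 + r0)) with (t - s0 - r0) in Hpair by ring.
  destruct (collinear_of_sq_dists _ _ _ _ _ _ Hr0' (Hpyth t Ht) Hpyth_r0 Hpair) as [Ec Ed].
  fold c in Ec. fold d in Ed. unfold E, angle_disp in Ec. unfold H, height_disp in Ed.
  destruct (sdiff_rep (th (g t)) (th (g s0))) as [n Hn].
  apply cyl_eq; unfold line, pt; cbn [th ht].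
  - rewrite <- (frac_id (th (g t))) by apply th_range. apply frac_eq. exists n.
    replace (th (g t)) with (th (g s0) + c * (t - s0) + IZR n) by lra. ring.
  - replace (ht (g t)) with (ht (g s0) + d * (t - s0)) by lra. ring.
Qed.

Lemma line_eq_of_close_points (a b c d a' b' c' d' t1 t2 : R) :
  c ^ 2 + d ^ 2 = 1 -> c' ^ 2 + d' ^ 2 = 1 -> 0 < t2 - t1 <= 1 / 4 ->
  line a b c d t1 = line a' b' c' d' t1 -> line a b c d t2 = line a' b' c' d' t2 ->
  forall t, line a b c d t = line a' b' c' d' t.
Proof.
  intros Hcd Hcd' Ht E1 E2 t.
  pose proof (unit_coord_le1 c d Hcd). pose proof (unit_coord_le1 c' d' Hcd').
  destruct (proj1 (frac_eq _ _) (f_equal th E1)) as [n1 Hn1].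
  destruct (proj1 (frac_eq _ _) (f_equal th E2)) as [n2 Hn2].
  apply (f_equal ht) in E1, E2. unfold line, pt in *; cbn [th ht] in *.
  assert (Hn : n2 = n1).
  { apply Z.sub_move_0_r, one_IZR_lt1. rewrite minus_IZR.
    assert (IZR n2 - IZR n1 = (c - c') * (t2 - t1)) by lra. split; nra. }
  subst n2.
  assert (c = c') as <- by nra. assert (d = d') as <- by nra. assert (b = b') as <- by lra.
  apply cyl_eq; cbn [th ht]; [|reflexivity].
  apply frac_eq. exists n1. lra.
Qed.

Lemma local_isometry_eq_line_pos (g : R -> cyl) (a b c d e0 : R) :
  local_isometry g -> c ^ 2 + d ^ 2 = 1 -> 0 < e0 ->
  (forall t, Rabs t < e0 -> g t = line a b c d t) ->
  forall s, 0 <= s -> g s = line a b c d s.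
Proof.
  intros Hg Hcd He0 Hloc s Hs. apply NNPP. intros Hns.
  set (A x := 0 <= x /\ forall t, 0 <= t <= x -> g t = line a b c d t).
  assert (HA0 : A (e0 / 2)).
  { split; [lra|]. intros t Ht. apply Hloc, Rabs_def1; lra. }
  assert (Hub : is_upper_bound A s).
  { intros x [Hx0 Hx]. destruct (Rle_dec x s) as [|Hxs]; [assumption|].
    exfalso. apply Hns, Hx. lra. }
  destruct (completeness A (ex_intro _ s Hub) (ex_intro _ _ HA0)) as [m [Hm_ub Hm_lub]].
  assert (Hm : e0 / 2 <= m) by (apply Hm_ub, HA0).
  destruct (local_isometry_locally_line g m Hg)
    as [eps0 [Heps0 [a' [b' [c' [d' [Hcd' Hm_line]]]]]]].
  set (eps := Rmin eps0 (e0 / 2)).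
  assert (Heps : 0 < eps) by (unfold eps, Rmin; destruct Rle_dec; lra).
  assert (Heps1 : eps <= eps0) by apply Rmin_l.
  assert (Heps2 : eps <= e0 / 2) by apply Rmin_r.
  assert (Hball : forall t, m - eps < t < m + eps -> g t = line a' b' c' d' t).
  { intros t Ht. apply Hm_line, Rabs_def1; lra. }
  assert (Hx : exists x, A x /\ m - eps < x).
  { apply NNPP. intros Hno. enough (m <= m - eps) by lra. apply Hm_lub.
    intros x Ax. destruct (Rle_dec x (m - eps)) as [|Hx]; [assumption|].
    exfalso. apply Hno. exists x. split; [assumption|lra]. }
  destruct Hx as [x [[Hx0 Hx] Hmx]].
  assert (Hxm : x <= m) by (apply Hm_ub; split; assumption).
  set (rho := Rmin ((x - (m - eps)) / 2) (1 / 4)).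
  assert (Hrho : 0 < rho) by (unfold rho, Rmin; destruct Rle_dec; lra).
  assert (Hrho1 : rho <= (x - (m - eps)) / 2) by apply Rmin_l.
  assert (Hrho2 : rho <= 1 / 4) by apply Rmin_r.
  (* near [m], [g] follows a second line, which must agree with the first on [x - rho, x] *)
  assert (Hsame : forall t, line a' b' c' d' t = line a b c d t).
  { apply (line_eq_of_close_points _ _ _ _ _ _ _ _ (x - rho) x Hcd' Hcd); [lra| |];
      rewrite <- Hball, Hx; first [reflexivity | lra]. }
  assert (HA : A (m + eps / 2)).
  { split; [lra|]. intros t Ht. destruct (Rle_dec t x); [apply Hx; lra|].
    rewrite <- Hsame. apply Hball. lra. }
  specialize (Hm_ub _ HA). lra.
Qed.

Lemma line_opp (a b c d s : R) : line a b c d (- s) = line a b (- c) (- d) s.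
Proof. unfold line. f_equal; ring. Qed.

Lemma local_isometry_opp (g : R -> cyl) : local_isometry g -> local_isometry (fun t => g (- t)).
Proof.
  intros Hg s. destruct (Hg (- s)) as [e [He Hiso]]. exists e. split; [assumption|].
  intros s1 s2 H1 H2.
  assert (Hopp : forall x y, Rabs (- x - - y) = Rabs (x - y))
    by (intros; rewrite <- Rabs_Ropp; f_equal; ring).
  rewrite Hiso, Hopp; [reflexivity | rewrite Hopp; assumption ..].
Qed.

Theorem geodesic_line_set (G : cyl -> Prop) : geodesic G ->
  exists a b c d, c ^ 2 + d ^ 2 = 1 /\ forall q, G q <-> line_set a b c d q.
Proof.
  intros [g [Hg HG]].
  destruct (local_isometry_locally_line g 0 Hg) as [eps [Heps [a [b [c [d [Hcd Hloc]]]]]]].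
  assert (Hall : forall s, g s = line a b c d s).
  { intros s. destruct (Rle_dec 0 s) as [Hs|Hs].
    - apply (local_isometry_eq_line_pos g a b c d eps Hg Hcd Heps); [|assumption].
      intros t Ht. apply Hloc. rewrite Rminus_0_r. assumption.
    - rewrite <- (Ropp_involutive s), line_opp.
      apply (local_isometry_eq_line_pos (fun t => g (- t)) a b (- c) (- d) eps);
        [apply local_isometry_opp, Hg | rewrite <- Hcd; ring | assumption | | lra].
      intros t Ht. rewrite <- line_opp. apply Hloc. rewrite Rminus_0_r, Rabs_Ropp. assumption. }
  exists a, b, c, d. split; [assumption|].
  intros q. rewrite HG. unfold line_set. split; intros [s Hs]; exists s; congruence.
Qed.

Definition helix (al be : R) : cyl -> Prop := fun q => th q = frac (al + be * ht q).

Definition circle (y : R) : cyl -> Prop := fun q => ht q = y.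

Lemma pt_in_helix (al be x y : R) : x = al + be * y -> helix al be (pt x y).
Proof. intros ->. reflexivity. Qed.

Lemma helix_slope0 (x : R) (q : cyl) : helix x 0 q <-> vline x q.
Proof. unfold helix, vline. rewrite Rmult_0_l, Rplus_0_r. reflexivity. Qed.

Lemma vline_th (p q : cyl) : vline (th p) q <-> th q = th p.
Proof. unfold vline. rewrite frac_id by apply th_range. reflexivity. Qed.

Lemma line_set_helix (a b c d : R) (q : cyl) : d <> 0 ->
  line_set a b c d q <-> helix (a - c / d * b) (c / d) q.
Proof.
  intros Hd. split.
  - intros [s <-]. unfold line, helix, pt; cbn [th ht]. apply frac_ext. field. assumption.
  - intros Hq. exists ((ht q - b) / d). apply cyl_eq; unfold line, pt; cbn [th ht].
    + rewrite Hq. apply frac_ext. field. assumption.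
    + field. assumption.
Qed.

Lemma helix_geodesic (al be : R) : geodesic (helix al be).
Proof.
  set (k := / sqrt (1 + be ^ 2)).
  assert (Hpos : 0 < 1 + be ^ 2) by (pose proof (pow2_ge_0 be); lra).
  assert (Hk : 0 < k) by (apply Rinv_0_lt_compat, sqrt_lt_R0, Hpos).
  assert (Hk2 : k ^ 2 * (1 + be ^ 2) = 1).
  { unfold k. rewrite pow_inv, <- Rsqr_pow2, Rsqr_sqrt by lra. field. lra. }
  apply (geodesic_of_line_set _ al 0 (be * k) k); [lra|].
  intros q. rewrite line_set_helix by lra. unfold helix.
  replace (al - be * k / k * 0) with al by (field; lra).
  replace (be * k / k) with be by (field; lra). reflexivity.
Qed.

Lemma circle_geodesic (y : R) : geodesic (circle y).
Proof.
  apply (geodesic_of_line_set _ 0 y 1 0); [ring|]. intros q. split.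
  - intros Hq. exists (th q). apply cyl_eq; unfold line, pt; cbn [th ht].
    + rewrite Rplus_0_l, Rmult_1_l. apply frac_id, th_range.
    + rewrite Hq. ring.
  - intros [s <-]. unfold circle, line, pt; cbn [ht]. ring.
Qed.

Lemma line_set_th_const (a b d : R) (q : cyl) : line_set a b 0 d q -> th q = frac a.
Proof. intros [s <-]. unfold line, pt; cbn [th]. apply frac_ext. ring. Qed.

Lemma line_set_ht_const (a b c : R) (q : cyl) : line_set a b c 0 q -> ht q = b.
Proof. intros [s <-]. unfold line, pt; cbn [ht]. ring. Qed.

Lemma line_set_meets_vline (a b c d x : R) : c <> 0 ->
  exists q, line_set a b c d q /\ vline x q.
Proof.
  intros Hc. exists (line a b c d ((x - a) / c)). split; [eexists; reflexivity|].
  unfold vline, line, pt; cbn [th]. apply frac_ext. field. assumption.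
Qed.

Lemma helix_revisits_angle (A m : R) (q : cyl) : helix A m q ->
  exists q', q' <> q /\ th q' = th q /\ helix A m q'.
Proof.
  intros Hq.
  (* a height step [w] along which the helix winds an integer number of times *)
  assert (Hw : exists w, w <> 0 /\ exists k : Z, m * w = IZR k).
  { destruct (Req_dec m 0) as [Hm|Hm].
    - exists 1. split; [lra|]. exists 0%Z. rewrite Hm. simpl. ring.
    - exists (/ m). split; [apply Rinv_neq_0_compat, Hm|]. exists 1%Z. simpl. field. exact Hm. }
  destruct Hw as [w [Hw [k Hk]]].
  exists (Cyl (th q) (ht q + w) (th_range q)). split; [|split; [reflexivity|]].
  - intros E. apply (f_equal ht) in E. cbn in E. lra.
  - unfold helix in *; cbn [th ht]. rewrite Hq, <- (frac_addZ _ k). apply frac_ext. rewrite <- Hk. ring.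
Qed.

Lemma helices_meet (A1 m1 A2 m2 : R) : m1 <> m2 -> exists q, helix A1 m1 q /\ helix A2 m2 q.
Proof.
  intros Hm. set (z := (A2 - A1) / (m1 - m2)).
  exists (pt (A1 + m1 * z) z). split; apply pt_in_helix; [reflexivity|]. unfold z. field. lra.
Qed.

Lemma helix_slope_unique (A1 m1 A2 m2 : R) :
  (forall q, helix A1 m1 q -> helix A2 m2 q) -> m1 = m2.
Proof.
  intros Hsub. enough (m1 - m2 = 0) by lra.
  apply (affine_Z_valued_const (A1 - A2)). intros z.
  assert (Hz := Hsub _ (pt_in_helix A1 m1 _ z eq_refl)).
  apply frac_eq in Hz as [n Hn]. exists n. rewrite <- Hn. cbn. ring.
Qed.

Lemma helix_parallel_common_point (al1 al2 be : R) (q : cyl) :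
  helix al1 be q -> helix al2 be q -> forall p, helix al1 be p -> helix al2 be p.
Proof.
  unfold helix. intros H1 H2 p Hp. rewrite H1 in H2. apply frac_eq in H2 as [n Hn].
  rewrite Hp. apply frac_eq. exists n. lra.
Qed.

Lemma image_app (f : cyl -> cyl) (G : cyl -> Prop) (p : cyl) : G p -> image f G (f p).
Proof. intros Hp. exists p. split; [exact Hp|reflexivity]. Qed.

(** * Geodesic-preserving bijections fixing a vertical line *)

Section GeodesicPreservingMap.

Variables (t0 : R) (f : cyl -> cyl).
Hypothesis f_bij : bijective f.
Hypothesis f_geod : geodesic_preserving f.
Hypothesis f_vline : forall q, image f (vline t0) q <-> vline t0 q.
Hypothesis f_fix0 : f (pt t0 0) = pt t0 0.

Lemma f_inj (p q : cyl) : f p = f q -> p = q.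
Proof.
  destruct f_bij as [g [Hgf _]]. intros E. rewrite <- (Hgf p), <- (Hgf q), E. reflexivity.
Qed.

Lemma f_surj (q : cyl) : exists p, f p = q.
Proof. destruct f_bij as [g [_ Hfg]]. exists (g q). apply Hfg. Qed.

Lemma vline_f (p : cyl) : vline t0 p -> vline t0 (f p).
Proof. intros Hp. apply f_vline, image_app, Hp. Qed.

Lemma vline_of_f (p : cyl) : vline t0 (f p) -> vline t0 p.
Proof.
  intros Hp. apply f_vline in Hp as [p' [Hp' E]]. apply f_inj in E. subst p'. exact Hp'.
Qed.

Lemma image_geodesic_line_set (G : cyl -> Prop) : geodesic G ->
  exists a b c d, c ^ 2 + d ^ 2 = 1 /\ forall q, image f G q <-> line_set a b c d q.
Proof. intros HG. apply geodesic_line_set, f_geod, HG. Qed.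

Definition phi (y : R) : R := ht (f (pt t0 y)).

(* A non-horizontal image of a circle would meet the invariant line [vline t0] twice. *)
Lemma ht_f (p : cyl) : ht (f p) = phi (ht p).
Proof.
  set (y := ht p).
  destruct (image_geodesic_line_set _ (circle_geodesic y)) as [a [b [c [d [_ HG]]]]].
  assert (Hp : line_set a b c d (f p)) by (apply HG, image_app; reflexivity).
  assert (H0 : line_set a b c d (f (pt t0 y))) by (apply HG, image_app; reflexivity).
  destruct (Req_dec d 0) as [-> | Hd].
  - unfold phi. now rewrite (line_set_ht_const _ _ _ _ Hp), (line_set_ht_const _ _ _ _ H0).
  - exfalso. rewrite line_set_helix in H0 by exact Hd.
    destruct (helix_revisits_angle _ _ _ H0) as [q' [Hq' [Hth Hhel]]].
    rewrite <- line_set_helix, <- HG in Hhel by exact Hd.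
    destruct Hhel as [p' [Hp' <-]].
    apply Hq'. f_equal. apply cyl_eq; [|exact Hp'].
    apply vline_of_f. unfold vline. rewrite Hth. apply vline_f. reflexivity.
Qed.

(* A non-vertical image of a vertical line would meet [vline t0], whose preimage is itself. *)
Lemma th_f (p q : cyl) : th p = th q -> th (f p) = th (f q).
Proof.
  intros Hpq. destruct (Req_dec (th p) (frac t0)) as [E|E].
  - transitivity (frac t0); [|symmetry]; apply vline_f; unfold vline; congruence.
  - destruct (image_geodesic_line_set _ (helix_geodesic (th p) 0)) as [a [b [c [d [_ HG]]]]].
    assert (Hmem : forall r, helix (th p) 0 r <-> th r = th p)
      by (intros r; rewrite helix_slope0, vline_th; reflexivity).
    destruct (Req_dec c 0) as [-> | Hc].
    + assert (Hp : line_set a b 0 d (f p)) by (apply HG, image_app, Hmem; reflexivity).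
      assert (Hq : line_set a b 0 d (f q)) by (apply HG, image_app, Hmem; congruence).
      now rewrite (line_set_th_const _ _ _ _ Hp), (line_set_th_const _ _ _ _ Hq).
    + exfalso. destruct (line_set_meets_vline a b c d t0 Hc) as [r' [Hr' Hv]].
      apply HG in Hr' as [r [Hr <-]]. apply vline_of_f in Hv. apply Hmem in Hr.
      apply E. unfold vline in Hv. congruence.
Qed.

Lemma th_f_inj (p q : cyl) : th (f p) = th (f q) -> th p = th q.
Proof.
  intros E.
  assert (Hp : th (pt (th p) 0) = th p) by (apply frac_id, th_range).
  assert (Hq : th (pt (th q) 0) = th q) by (apply frac_id, th_range).
  assert (E' : f (pt (th p) 0) = f (pt (th q) 0)).
  { apply cyl_eq.
    - rewrite (th_f _ _ Hp), (th_f _ _ Hq). exact E.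
    - rewrite !ht_f. reflexivity. }
  apply f_inj in E'. rewrite <- Hp, <- Hq, E'. reflexivity.
Qed.

Lemma phi_inj (y1 y2 : R) : phi y1 = phi y2 -> y1 = y2.
Proof.
  intros E. assert (E' : f (pt t0 y1) = f (pt t0 y2)).
  { apply cyl_eq; [|exact E]. transitivity (frac t0); [|symmetry]; apply vline_f; reflexivity. }
  apply f_inj in E'. exact (f_equal ht E').
Qed.

Lemma phi_Z_valued_multiple (r : R) : (forall x, exists n : Z, r * phi x = IZR n) -> r = 0.
Proof.
  intros Hr. apply (affine_Z_valued_const 0). intros z.
  destruct (f_surj (pt t0 z)) as [p Hp]. destruct (Hr (ht p)) as [n Hn].
  exists n. rewrite <- Hn, <- ht_f, Hp. cbn. ring.
Qed.

Lemma image_helix (al be : R) : be <> 0 ->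
  exists A m, m <> 0 /\ forall q, image f (helix al be) q <-> helix A m q.
Proof.
  intros Hbe.
  destruct (image_geodesic_line_set _ (helix_geodesic al be)) as [a [b [c [d [_ HG]]]]].
  assert (Hon : forall x y, x = al + be * y -> line_set a b c d (f (pt x y)))
    by (intros x y Hxy; apply HG, image_app, pt_in_helix, Hxy).
  destruct (Req_dec d 0) as [-> | Hd].
  { assert (E0 := line_set_ht_const _ _ _ _ (Hon al 0 ltac:(ring))).
    assert (E1 := line_set_ht_const _ _ _ _ (Hon (al + be) 1 ltac:(ring))).
    rewrite ht_f in E0, E1. cbn [ht pt] in E0, E1.
    exfalso. apply R1_neq_R0, phi_inj. congruence. }
  destruct (Req_dec c 0) as [-> | Hc].
  { assert (E0 := line_set_th_const _ _ _ _ (Hon al 0 ltac:(ring))).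
    assert (E1 := line_set_th_const _ _ _ _ (Hon (al + 1 / 2) (1 / (2 * be)) ltac:(field; exact Hbe))).
    exfalso. apply (frac_add_half_neq al), (th_f_inj (pt _ (1 / (2 * be))) (pt _ 0)). congruence. }
  exists (a - c / d * b), (c / d). split.
  - unfold Rdiv. apply Rmult_integral_contrapositive. split; [|apply Rinv_neq_0_compat]; assumption.
  - intros q. rewrite HG. apply line_set_helix, Hd.
Qed.

Lemma image_parallel_helices_slope (al1 al2 be A1 A2 m1 m2 : R) :
  (forall q, image f (helix al1 be) q <-> helix A1 m1 q) ->
  (forall q, image f (helix al2 be) q <-> helix A2 m2 q) -> m1 = m2.
Proof.
  intros H1 H2. destruct (Req_dec m1 m2) as [|Hm]; [assumption|].
  destruct (helices_meet A1 m1 A2 m2 Hm) as [q [Hq1 Hq2]].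
  apply H1 in Hq1 as [p1 [Hp1 <-]]. apply H2 in Hq2 as [p2 [Hp2 E]].
  apply f_inj in E. subst p2.
  apply (helix_slope_unique A1 m1 A2 m2). intros q Hq.
  apply H2. apply H1 in Hq as [p [Hp <-]]. apply image_app.
  exact (helix_parallel_common_point _ _ _ _ Hp1 Hp2 p Hp).
Qed.

Lemma th_f_on_helix (al be A m x y : R) :
  (forall q, image f (helix al be) q <-> helix A m q) -> x = al + be * y ->
  th (f (pt x y)) = frac (A + m * phi y).
Proof.
  intros HA Hxy. assert (H := proj1 (HA _) (image_app _ _ _ (pt_in_helix _ _ _ _ Hxy))).
  unfold helix in H. rewrite ht_f in H. exact H.
Qed.

Definition image_slope (be m : R) : Prop :=
  exists A, forall q, image f (helix t0 be) q <-> helix A m q.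

Lemma image_helix_offset (be A m : R) :
  (forall q, image f (helix t0 be) q <-> helix A m q) -> frac A = frac t0.
Proof.
  intros HA. assert (H := th_f_on_helix _ _ _ _ t0 0 HA ltac:(ring)).
  rewrite f_fix0 in H. unfold phi in H. rewrite f_fix0 in H. cbn in H.
  rewrite Rmult_0_r, Rplus_0_r in H. symmetry. exact H.
Qed.

Lemma image_slope_parallel (be m al : R) : be <> 0 -> image_slope be m ->
  exists A, forall q, image f (helix al be) q <-> helix A m q.
Proof.
  intros Hbe [A HA]. destruct (image_helix al be Hbe) as [A' [m' [_ HA']]].
  exists A'. rewrite (image_parallel_helices_slope _ _ _ _ _ _ _ HA HA'). exact HA'.
Qed.

(* Compare the helix of slope [be] through [(t0, y)] with the one through [(t0, 0)]. *)
Lemma image_slope_defect (be m : R) : be <> 0 -> image_slope be m ->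
  forall x y, exists n : Z, m * (phi (x + y) - phi x - phi y) = IZR n.
Proof.
  intros Hbe Hm x y. destruct (image_slope_parallel be m (t0 - be * y) Hbe Hm) as [Ay HAy].
  destruct Hm as [A HA].
  assert (E0 : th (f (pt t0 y)) = frac t0) by (apply vline_f; reflexivity).
  rewrite (th_f_on_helix _ _ _ _ t0 y HAy ltac:(ring)) in E0.
  assert (E1 := th_f (pt (t0 + be * x) (x + y)) (pt (t0 + be * x) x) eq_refl).
  rewrite (th_f_on_helix _ _ _ _ (t0 + be * x) (x + y) HAy ltac:(ring)),
          (th_f_on_helix _ _ _ _ (t0 + be * x) x HA ltac:(ring)) in E1.
  assert (E2 := image_helix_offset _ _ _ HA).
  apply frac_eq in E0 as [n0 Hn0], E1 as [n1 Hn1], E2 as [n2 Hn2].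
  exists (n1 - n0 + n2)%Z. rewrite plus_IZR, minus_IZR. lra.
Qed.

Lemma image_slope_half (be m m' : R) : be <> 0 ->
  image_slope be m -> image_slope (be / 2) m' -> m' = m / 2.
Proof.
  intros Hbe Hm [A' HA']. assert (Hdef := image_slope_defect be m Hbe Hm).
  destruct Hm as [A HA].
  enough (2 * m' - m = 0) by lra.
  apply phi_Z_valued_multiple. intros x.
  assert (E := th_f (pt (t0 + be / 2 * x) x) (pt (t0 + be / 2 * x) (x / 2)) eq_refl).
  rewrite (th_f_on_helix _ _ _ _ (t0 + be / 2 * x) x HA' ltac:(ring)),
          (th_f_on_helix _ _ _ _ (t0 + be / 2 * x) (x / 2) HA ltac:(field)) in E.
  assert (EA : frac A' = frac A)
    by (rewrite (image_helix_offset _ _ _ HA), (image_helix_offset _ _ _ HA'); reflexivity).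
  destruct (Hdef (x / 2) (x / 2)) as [n2 Hn2].
  replace (x / 2 + x / 2) with x in Hn2 by field.
  apply frac_eq in E as [n0 Hn0], EA as [n1 Hn1].
  exists (2 * (n0 - n1) - n2)%Z. rewrite minus_IZR, mult_IZR, minus_IZR. simpl. lra.
Qed.

Lemma image_slope_pow2 : exists m0, m0 <> 0 /\ forall k, image_slope (/ 2 ^ k) (m0 / 2 ^ k).
Proof.
  destruct (image_helix t0 1 R1_neq_R0) as [A [m0 [Hm0 HA]]].
  exists m0. split; [assumption|]. induction k as [|k IH].
  - exists A. simpl. rewrite Rinv_1. unfold Rdiv. rewrite Rinv_1, Rmult_1_r. exact HA.
  - assert (Hk : 2 ^ k <> 0) by (apply pow_nonzero; lra).
    assert (Hbe : / 2 ^ k <> 0) by (apply Rinv_neq_0_compat, Hk).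
    destruct (image_helix t0 (/ 2 ^ k / 2) ltac:(lra)) as [A' [m' [_ HA']]].
    assert (Hm' := image_slope_half _ _ _ Hbe IH (ex_intro _ A' HA')).
    exists A'. replace (/ 2 ^ S k) with (/ 2 ^ k / 2) by (simpl; field; exact Hk).
    replace (m0 / 2 ^ S k) with m' by (rewrite Hm'; simpl; field; exact Hk). exact HA'.
Qed.

(* [m0 / 2 ^ k] times the defect is an integer for every [k]. *)
Lemma phi_additive (x y : R) : phi (x + y) = phi x + phi y.
Proof.
  destruct image_slope_pow2 as [m0 [Hm0 Hs]].
  set (E := phi (x + y) - phi x - phi y).
  destruct (Req_dec E 0) as [HE|HE]; [unfold E in HE; lra|exfalso].
  destruct (exists_pow2_gt (Rabs (m0 * E))) as [N HN].
  assert (HN0 : 0 < 2 ^ N) by (apply pow_lt; lra).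
  destruct (image_slope_defect _ _ (Rinv_neq_0_compat _ (Rgt_not_eq _ _ HN0)) (Hs N) x y)
    as [n Hn]. fold E in Hn.
  assert (n = 0%Z) as ->.
  { apply one_IZR_lt1. rewrite <- Hn. apply Rabs_def2 in HN.
    assert (m0 * E = m0 / 2 ^ N * E * 2 ^ N) by (field; lra). split; nra. }
  apply HE. apply Rmult_integral in Hn as [Hn|Hn]; [|exact Hn].
  exfalso. unfold Rdiv in Hn. apply Rmult_integral in Hn as [Hn|Hn]; [lra|].
  apply (Rinv_neq_0_compat _ (Rgt_not_eq _ _ HN0)), Hn.
Qed.

End GeodesicPreservingMap.

Theorem lemma4p4 (t0 : R) (f : cyl -> cyl) :
  bijective f -> geodesic_preserving f ->
  (forall q, image f (vline t0) q <-> vline t0 q) ->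
  f (pt t0 0) = pt t0 0 ->
  f (pt t0 1) = pt t0 1 ->
  forall (n : Z) (m : nat), f (pt t0 (IZR n / 2 ^ m)) = pt t0 (IZR n / 2 ^ m).
Proof.
  intros Hbij Hgeod Hv H0 H1 n m. apply cyl_eq.
  - apply (vline_f t0 f Hv). reflexivity.
  - change (phi t0 f (IZR n / 2 ^ m) = IZR n / 2 ^ m).
    apply additive_fix_dyadic.
    + exact (phi_additive t0 f Hbij Hgeod Hv H0).
    + exact (f_equal ht H1).
Qed.
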